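(* Let $m\ge3$ and $\Omega=\{B\subset\mathcal M:1\le|B|\le m-2\}$. The singleton partition $\mathcal S$ is (a) a minimizer of $\Delta$ (i.e. $\Delta(\mathcal S)=\mathbf I(X_{\mathcal M})$) if and only if $\Delta(\mathcal S)\le\Delta(\mathcal P_B)$ for all $B\in\Omega$; (b) the unique minimizer of $\Delta$ if and only if $\Delta(\mathcal S)<\Delta(\mathcal P_B)$ for all $B\in\Omega$.
   Context: Let $\mathcal M=\{1,\dots,m\}$, and let $X_{\mathcal M}$ be jointly distributed finite-valued random variables, with $X_A=(X_i:i\in A)$. For a partition $\mathcal P$ of $\mathcal M$ with $|\mathcal P|\ge2$, $\Delta(\mathcal P)=\frac1{|\mathcal P|-1}[\sum_{A\in\mathcal P}H(X_A)-H(X_{\mathcal M})]$, and $\mathbf I(X_{\mathcal M})=\min_{\mathcal P}\Delta(\mathcal P)$ over all such partitions. $\mathcal S=\{\{1\},\dots,\{m\}\}$. For a nonempty $B=\{b_1,\dots,b_{|B|}\}\subsetneq\mathcal M$, $\mathcal P_B=\{B^c,\{b_1\},\dots,\{b_{|B|}\}\}$. *)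

From HB Require Import structures.
From mathcomp Require Import all_boot.
From Stdlib Require Import Reals.

Set Implicit Arguments.
Unset Strict Implicit.
Unset Printing Implicit Defensive.

Lemma Rplus_assoc' : associative Rplus.
Proof. by move=> x y z; rewrite Rplus_assoc. Qed.
HB.instance Definition _ := Monoid.isComLaw.Build R 0%R Rplus
  Rplus_assoc' Rplus_comm Rplus_0_l.

Section Entropy.
Variables (m : nat) (V : finType).
(* An outcome is the joint value (x_1,...,x_m) of X_M; X_i w = w i. *)
Local Notation Omega0 := {ffun 'I_m -> V}.
Variable p : Omega0 -> R.

Definition is_pmf : Prop :=
  (forall w, (0 <= p w)%R) /\ (\big[Rplus/0%R]_(w : Omega0) p w) = 1%R.

Definition probXA (A : {set 'I_m}) (w : Omega0) : R :=
  \big[Rplus/0%R]_(w' : Omega0 | [forall i in A, w' i == w i]) p w'.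

(* Shannon entropy H(X_A) = E[-log P(X_A)] (natural log; base is irrelevant
   for the statement). Terms with p w = 0 vanish, matching 0 log 0 = 0. *)
Definition Hent (A : {set 'I_m}) : R :=
  (- \big[Rplus/0%R]_(w : Omega0) (p w * ln (probXA A w)))%R.

Definition admissible (P : {set {set 'I_m}}) : bool :=
  partition P [set: 'I_m] && (2 <= #|P|)%N.

Definition Delta_part (P : {set {set 'I_m}}) : R :=
  ((\big[Rplus/0%R]_(A in P) Hent A) - Hent [set: 'I_m]) / INR (#|P| - 1).

Definition minimizer (P : {set {set 'I_m}}) : Prop :=
  admissible P /\ forall Q, admissible Q -> (Delta_part P <= Delta_part Q)%R.

Definition unique_minimizer (P : {set {set 'I_m}}) : Prop :=
  minimizer P /\ forall Q, minimizer Q -> Q = P.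

Definition Sing : {set {set 'I_m}} := [set [set i] | i : 'I_m].

Definition PB (B : {set 'I_m}) : {set {set 'I_m}} :=
  ~: B |: [set [set b] | b in B].

Definition inOmega (B : {set 'I_m}) : bool :=
  (1 <= #|B| <= m - 2)%N.

End Entropy.

From HB Require Import structures.
From mathcomp Require Import all_boot zify.
From Stdlib Require Import Reals Lra.

(* Only the entropies as a set function matter, so everything below is proved for an arbitrary [h : {set 'I_m} -> R].  Put
   [defect C := Delta S * (|C| - 1) - (sum_(i in C) h {i} - h C)].  For an
   admissible partition P one has the identity
     (Delta P - Delta S) * (|P| - 1) = sum_(A in P) defect A.
   Singletons and M itself have defect 0, and applying the identity to
   P_(C^c) = {C} + singletons shows that for 2 <= |C| <= m - 1
     defect C = (Delta P_(C^c) - Delta S) * |C^c|, with C^c in Omega.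
   Hence the hypotheses on the P_B make every defect nonnegative (positive on
   blocks of size 2..m-1, which every admissible P other than S has). *)

Set Implicit Arguments.
Unset Strict Implicit.
Unset Printing Implicit Defensive.

Section RealSums.
Local Open Scope R_scope.
Variables (T : finType) (A : {pred T}).
Implicit Types f g : T -> R.

Lemma sumR_sub f g :
  \big[Rplus/0]_(i in A) (f i - g i) =
  \big[Rplus/0]_(i in A) f i - \big[Rplus/0]_(i in A) g i.
Proof.
rewrite /Rminus big_split /=; congr Rplus.
by rewrite (big_morph Ropp Ropp_plus_distr Ropp_0).
Qed.

Lemma sumR_mull c f :
  \big[Rplus/0]_(i in A) (c * f i) = c * \big[Rplus/0]_(i in A) f i.
Proof. by rewrite (big_morph (Rmult c) (Rmult_plus_distr_l c) (Rmult_0_r c)). Qed.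

Lemma sumR_INR (n : T -> nat) :
  \big[Rplus/0]_(i in A) INR (n i) = INR (\sum_(i in A) n i).
Proof. by rewrite (big_morph INR plus_INR (erefl (INR 0))). Qed.

Lemma sumR_ge0 f : {in A, forall i, 0 <= f i} -> 0 <= \big[Rplus/0]_(i in A) f i.
Proof. by move=> f_ge0; apply: (big_ind (Rle 0)) => [|x y *|]; [lra|lra|]. Qed.

Lemma sumR_gt0 f i0 : i0 \in A -> 0 < f i0 -> {in A, forall i, 0 <= f i} ->
  0 < \big[Rplus/0]_(i in A) f i.
Proof.
move=> Ai0 f_i0 f_ge0; rewrite (bigD1 i0) //=.
have : 0 <= \big[Rplus/0]_(i in A | i != i0) f i.
  by apply: (big_ind (Rle 0)) => [|x y *|i /andP[/f_ge0]]; [lra|lra|].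
lra.
Qed.

End RealSums.

Section Partitions.
Variable m : nat.
Implicit Types (P : {set {set 'I_m}}) (B C : {set 'I_m}).

Lemma card_Sing : #|Sing m| = m.
Proof. by rewrite card_imset ?card_ord //; apply: set1_inj. Qed.

Lemma set1_in_Sing (i : 'I_m) : [set i] \in Sing m.
Proof. exact: imset_f. Qed.

Lemma partition_Sing : partition (Sing m) [set: 'I_m].
Proof.
apply/and3P; split.
- apply/eqP/setP => x; rewrite inE; apply/bigcupP.
  by exists [set x]; rewrite ?set1_in_Sing ?inE.
- apply/trivIsetP => _ _ /imsetP[a _ ->] /imsetP[b _ ->] neq_ab.
  by rewrite disjoints1 inE; apply: contra neq_ab => /eqP->.
- by apply/imsetP => -[a _ /setP/(_ a)]; rewrite !inE eqxx.
Qed.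

Lemma admissible_Sing : (1 < m)%N -> admissible (Sing m).
Proof. by move=> m_gt1; rewrite /admissible partition_Sing card_Sing. Qed.

Lemma setC_notin_singletons B : ~: B \notin [set [set b] | b in B].
Proof. by apply/imsetP => -[b Bb /setP/(_ b)]; rewrite !inE Bb eqxx. Qed.

Lemma card_PB B : #|PB B| = #|B|.+1.
Proof. by rewrite cardsU1 setC_notin_singletons card_imset //; apply: set1_inj. Qed.

Lemma partition_PB B : ~: B != set0 -> partition (PB B) [set: 'I_m].
Proof.
move=> BC_neq0; apply/and3P; split.
- apply/eqP/setP => x; rewrite inE; apply/bigcupP.
  case Bx: (x \in B).
  + by exists [set x]; rewrite /PB !inE ?imset_f ?orbT.
  + by exists (~: B); rewrite /PB !inE ?Bx ?eqxx.
- apply/trivIsetP => A1 A2; rewrite /PB !inE.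
  move=> /predU1P[->|/imsetP[a Ba ->]] /predU1P[->|/imsetP[b Bb ->]] neq12.
  + by rewrite eqxx in neq12.
  + by rewrite disjoint_sym disjoints1 inE Bb.
  + by rewrite disjoints1 inE Ba.
  + by rewrite disjoints1 inE; apply: contra neq12 => /eqP->.
- rewrite /PB !inE negb_or eq_sym BC_neq0 /=.
  by apply/imsetP => -[a _ /setP/(_ a)]; rewrite !inE eqxx.
Qed.

Lemma card_setC C : #|~: C| = (m - #|C|)%N.
Proof. by rewrite cardsCs setCK card_ord. Qed.

Lemma admissible_PB B : inOmega B -> admissible (PB B).
Proof.
rewrite /inOmega => /andP[B_gt0 B_le].
have BC_gt1 : (1 < #|~: B|)%N by rewrite card_setC; lia.
rewrite /admissible card_PB ltnS B_gt0 partition_PB //.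
by rewrite -card_gt0; lia.
Qed.

Lemma PB_neq_Sing B : inOmega B -> PB B != Sing m.
Proof.
rewrite /inOmega => /andP[B_gt0 B_le]; apply/eqP => PB_Sing.
have : ~: B \in PB B by rewrite !inE eqxx.
rewrite PB_Sing => /imsetP[x _ BC_x].
by move: (card_setC B); rewrite BC_x cards1; lia.
Qed.

Lemma inOmega_setC C : (1 < #|C|)%N -> C != [set: 'I_m] -> inOmega (~: C).
Proof.
move=> C_gt1 C_neqT; rewrite /inOmega card_setC.
have : (#|C| < #|[set: 'I_m]|)%N by apply: proper_card; rewrite properT.
rewrite cardsT card_ord.
by move=> C_lt; apply/andP; split; lia.
Qed.

Lemma admissible_block_neq0 P A : admissible P -> A \in P -> A != set0.
Proof. by case/andP => /and3P[_ _ P0] _ PA; apply: contraNneq P0 => <-. Qed.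

Lemma setT_notin_admissible P : admissible P -> [set: 'I_m] \notin P.
Proof.
case/andP => /and3P[_ tiP P0] /card_gt1P[A1 [A2 [PA1 PA2 neq12]]].
apply/negP => PT.
have [A PA A_neqT] : exists2 A, A \in P & A != [set: 'I_m].
  by case: (eqVneq A1 [set: 'I_m]) => [eq1|]; [exists A2; rewrite // -eq1 eq_sym|exists A1].
move/trivIsetP/(_ _ _ PT PA): tiP; rewrite eq_sym A_neqT => /(_ isT).
by move/disjoint_setI0; rewrite setTI => A0; rewrite -A0 PA in P0.
Qed.

Lemma partition_of_singletons P :
  partition P [set: 'I_m] -> {in P, forall A : {set 'I_m}, #|A| = 1%N} -> P = Sing m.
Proof.
case/and3P => /eqP coverP _ _ P_card1; apply/setP => A; apply/idP/idP.
- by move=> PA; have /eqP/cards1P[x ->] := P_card1 A PA; apply: set1_in_Sing.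
- case/imsetP => x _ ->.
  have : x \in cover P by rewrite coverP inE.
  case/bigcupP => A' PA' A'x; have /eqP/cards1P[y A'y] := P_card1 A' PA'.
  by move: A'x PA'; rewrite A'y inE => /eqP->.
Qed.

Lemma admissible_neq_Sing P : admissible P -> P != Sing m ->
  exists2 A, A \in P & (1 < #|A|)%N && (A != [set: 'I_m]).
Proof.
move=> admP P_neqS.
case: (boolP [exists A in P, (1 < #|A|)%N && (A != [set: 'I_m])]).
  by case/exists_inP => A PA A_big; exists A.
move/exists_inPn => P_small; case/negP: P_neqS; apply/eqP.
have /andP[partP _] := admP.
apply: partition_of_singletons => // A PA.
have A_gt0 : (0 < #|A|)%N by rewrite card_gt0 (admissible_block_neq0 admP).
move: (P_small A PA); rewrite negb_and negbK => /orP[|/eqP AT]; first lia.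
by move: (setT_notin_admissible admP); rewrite -AT PA.
Qed.

End Partitions.

Section Delta.
Local Open Scope R_scope.
Variables (m : nat) (h : {set 'I_m} -> R).
Hypothesis m_gt1 : (1 < m)%nat.
Implicit Types (P : {set {set 'I_m}}) (B C : {set 'I_m}).

Definition Delta P :=
  (\big[Rplus/0]_(A in P) h A - h [set: 'I_m]) / INR (#|P| - 1).

Definition sum_singletons C := \big[Rplus/0]_(i in C) h [set i].

Definition defect C :=
  Delta (Sing m) * (INR #|C| - 1) - (sum_singletons C - h C).

Lemma Delta_mul P : (1 < #|P|)%nat ->
  Delta P * (INR #|P| - 1) = \big[Rplus/0]_(A in P) h A - h [set: 'I_m].
Proof.
move=> P_gt1; have P_pos : 0 < INR #|P| - 1.
  by have := lt_INR 1 _ (ltP P_gt1); rewrite INR_1; lra.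
by rewrite /Delta minus_INR ?INR_1; [field; lra | apply/leP; lia].
Qed.

Lemma sum_singletons_partition P : partition P [set: 'I_m] ->
  \big[Rplus/0]_(A in P) sum_singletons A = sum_singletons [set: 'I_m].
Proof. by case/and3P => /eqP coverP tiP _; rewrite -big_trivIset // coverP. Qed.

Lemma sum_card_partition P : partition P [set: 'I_m] ->
  \big[Rplus/0]_(A in P) INR #|A| = INR m.
Proof. by move=> partP; rewrite sumR_INR -(card_partition partP) cardsT card_ord. Qed.

Lemma sum_Sing f : \big[Rplus/0]_(A in Sing m) f A = \big[Rplus/0]_i f [set i].
Proof. by rewrite big_imset //; move=> x y _ _; apply: set1_inj. Qed.

Lemma Delta_Sing_mul :
  Delta (Sing m) * (INR m - 1) = sum_singletons [set: 'I_m] - h [set: 'I_m].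
Proof.
have := @Delta_mul (Sing m); rewrite card_Sing sum_Sing => -> //.
by congr (_ - _); apply: eq_bigl => i; rewrite inE.
Qed.

Lemma Delta_sub_Delta_Sing P : admissible P ->
  (Delta P - Delta (Sing m)) * (INR #|P| - 1) = \big[Rplus/0]_(A in P) defect A.
Proof.
case/andP => partP P_gt1.
have DeltaP := Delta_mul P_gt1.
rewrite /defect !sumR_sub sumR_mull sumR_sub sum_card_partition //.
rewrite sum_singletons_partition //.
have -> : \big[Rplus/0]_(A in P) 1 = INR #|P|.
  by rewrite -sum1_card -sumR_INR.
move: Delta_Sing_mul; lra.
Qed.

Lemma defect_set1 i : defect [set i] = 0.
Proof. by rewrite /defect /sum_singletons big_set1 cards1 /=; lra. Qed.

Lemma defect_setC C : inOmega (~: C) ->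
  defect C = (Delta (PB (~: C)) - Delta (Sing m)) * INR #|~: C|.
Proof.
move=> Omega_CC.
have := Delta_sub_Delta_Sing (admissible_PB Omega_CC).
rewrite card_PB S_INR Rplus_minus_r => ->.
rewrite big_setU1 ?setC_notin_singletons //= setCK big_imset; last first.
  by move=> x y _ _; apply: set1_inj.
by rewrite big1 ?Rplus_0_r // => i _; apply: defect_set1.
Qed.

Lemma defect_ge0 C : C != set0 ->
  (forall B, inOmega B -> Delta (Sing m) <= Delta (PB B)) -> 0 <= defect C.
Proof.
move=> C_neq0 Delta_le.
have [C_le1|C_gt1] := leqP #|C| 1.
  have /cards1P[i ->] : #|C| == 1%nat by rewrite eqn_leq C_le1 card_gt0.
  by rewrite defect_set1; lra.
have [->|C_neqT] := eqVneq C [set: 'I_m].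
  by rewrite /defect cardsT card_ord Delta_Sing_mul; lra.
have Omega_CC := inOmega_setC C_gt1 C_neqT.
rewrite defect_setC //; apply: Rmult_le_pos; last exact: pos_INR.
by have := Delta_le _ Omega_CC; lra.
Qed.

Lemma defect_gt0 C : (1 < #|C|)%nat -> C != [set: 'I_m] ->
  (forall B, inOmega B -> Delta (Sing m) < Delta (PB B)) -> 0 < defect C.
Proof.
move=> C_gt1 C_neqT Delta_lt; have Omega_CC := inOmega_setC C_gt1 C_neqT.
rewrite defect_setC //; apply: Rmult_lt_0_compat.
- by have := Delta_lt _ Omega_CC; lra.
- by apply: lt_0_INR; apply/ltP; case/andP: Omega_CC.
Qed.

Lemma card_admissible_pos P : admissible P -> 0 < INR #|P| - 1.
Proof. by case/andP => _ /ltP/(lt_INR 1); rewrite INR_1; lra. Qed.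

Lemma Delta_Sing_le P : admissible P ->
  (forall B, inOmega B -> Delta (Sing m) <= Delta (PB B)) ->
  Delta (Sing m) <= Delta P.
Proof.
move=> admP Delta_le; have := card_admissible_pos admP.
have := Delta_sub_Delta_Sing admP.
have : 0 <= \big[Rplus/0]_(A in P) defect A.
  by apply: sumR_ge0 => A PA; apply: defect_ge0 (admissible_block_neq0 admP PA) _.
nra.
Qed.

Lemma Delta_Sing_lt P : admissible P -> P != Sing m ->
  (forall B, inOmega B -> Delta (Sing m) < Delta (PB B)) ->
  Delta (Sing m) < Delta P.
Proof.
move=> admP P_neqS Delta_lt; have := card_admissible_pos admP.
have := Delta_sub_Delta_Sing admP.
have [A0 PA0 /andP[A0_gt1 A0_neqT]] := admissible_neq_Sing admP P_neqS.
have : 0 < \big[Rplus/0]_(A in P) defect A.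
  apply: (sumR_gt0 PA0); first exact: defect_gt0.
  move=> A PA; apply: defect_ge0 (admissible_block_neq0 admP PA) _.
  by move=> B /Delta_lt; lra.
nra.
Qed.

End Delta.

Theorem proposition2 (m : nat) (V : finType) (p : {ffun 'I_m -> V} -> R)
  (hm : (3 <= m)%N) (hp : is_pmf p) :
  (minimizer p (Sing m) <->
     (forall B : {set 'I_m}, inOmega B -> (Delta_part p (Sing m) <= Delta_part p (PB B))%R))
  /\
  (unique_minimizer p (Sing m) <->
     (forall B : {set 'I_m}, inOmega B -> (Delta_part p (Sing m) < Delta_part p (PB B))%R)).
Proof.
have m_gt1 : (1 < m)%N by lia.
have admS := admissible_Sing m_gt1.
rewrite /unique_minimizer /minimizer; change (Delta_part p) with (Delta (Hent p)).
split; split.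
- by case=> _ minS B OmegaB; apply: minS; apply: admissible_PB.
- by move=> Delta_le; split=> // Q admQ; apply: Delta_Sing_le.
- case=> [[_ minS] uniqS] B OmegaB; have admPB := admissible_PB OmegaB.
  case: (Rle_lt_or_eq_dec _ _ (minS _ admPB)) => // DeltaPB.
  case/eqP: (PB_neq_Sing OmegaB); apply: uniqS; split=> // Q admQ.
  by rewrite -DeltaPB; apply: minS.
- move=> Delta_lt; split.
    by split=> // Q admQ; apply: Delta_Sing_le => // B /Delta_lt; lra.
  move=> Q [admQ minQ]; apply/eqP/negPn/negP => Q_neqS.
  by have := Delta_Sing_lt m_gt1 admQ Q_neqS Delta_lt; have := minQ _ admS; lra.
Qed.
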